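(* Let $\gamma>0$, $y>0$ and $x_1\ge0$ be real numbers with $y+4x_1<1$. Then the function $\sigma\mapsto I_{y,x_1}(\sigma)$ is strictly increasing on its domain $\{\sigma\ge0: y+4x_1+\sigma/\gamma<1\}$.
   Context: $E(x)=-x\log_qx-(1-x)\log_q(1-x)$ for $0<x<1$, $E(0)=E(1)=0$. $S(\sigma,y,x,t_1)=E(t_1)+(1-t_1)E\bigl(\frac{y+x+t_1}{1-t_1}\bigr)+Z$, where $Z=(y+\sigma/\gamma+t_1)E\bigl(\frac{y+x+t_1}{y+\sigma/\gamma+t_1}\bigr)$ if $\frac{y+x+t_1}{y+\sigma/\gamma+t_1}\ge1-\frac1q$ and $Z=(y+\sigma/\gamma+t_1)-(y+x+t_1)\log_q(q-1)$ otherwise. $I_{y,x_1}(\sigma)=\max S(\sigma,y,x,t_1)$ over real $0\le t_1\le2x_1$, $0\le x\le\sigma/\gamma$. *)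

From Stdlib Require Import Reals.
From Coquelicot Require Import Coquelicot.
Open Scope R_scope.

Definition logq (q : nat) (x : R) : R := ln x / ln (INR q).

(* q-ary entropy: E(x) = -x log_q x - (1-x) log_q (1-x) for 0<x<1,
   E(0)=E(1)=0 (and, by convention, 0 outside [0,1], never used). *)
Definition Ent (q : nat) (x : R) : R :=
  if Rlt_dec 0 x then
    if Rlt_dec x 1 then - x * logq q x - (1 - x) * logq q (1 - x) else 0
  else 0.

Definition Zterm (q : nat) (gamma sigma y x t1 : R) : R :=
  let a := y + x + t1 in
  let b := y + sigma / gamma + t1 in
  if Rle_dec (1 - 1 / INR q) (a / b) then b * Ent q (a / b)
  else b - a * logq q (INR q - 1).

Definition Sfun (q : nat) (gamma sigma y x t1 : R) : R :=
  Ent q t1 + (1 - t1) * Ent q ((y + x + t1) / (1 - t1))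
  + Zterm q gamma sigma y x t1.

(* I_{y,x1}(sigma) = max of S over 0 <= t1 <= 2 x1, 0 <= x <= sigma/gamma,
   formalized as the supremum of the set of attained values. *)
Definition Ifun (q : nat) (gamma y x1 sigma : R) : R :=
  real (Lub_Rbar (fun v => exists x t1,
    0 <= t1 <= 2 * x1 /\ 0 <= x <= sigma / gamma /\
    v = Sfun q gamma sigma y x t1)).

From Stdlib Require Import Reals Lra.
From Coquelicot Require Import Coquelicot.
Open Scope R_scope.

(* Only the term Z depends on sigma, through b = y + sigma/gamma + t1, and
   b |-> Z - b is nondecreasing for fixed a = y + x + t1.  Below the threshold
   Z - b does not depend on b.  Above it, b E(a/b) ln q equals
   b ln b - a ln a - (b-a) ln (b-a), which by the log-sum inequality is concave
   in b with slope ln (b/(b-a)) >= ln q there.  Across the threshold, Gibbs'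
   inequality b E(a/b) <= b - a log_q (q-1) bridges the two branches.  Hence
   raising sigma by d raises every value of S by at least d/gamma on a feasible
   region that only grows, and since S is bounded the supremum rises by at
   least d/gamma. *)

Lemma ln_le_sub1 x : 0 < x -> ln x <= x - 1.
Proof. intros Hx. pose proof (exp_ineq1_le (ln x)) as E. rewrite exp_ln in E; lra. Qed.

(* Also valid at [x = 0], where Rocq's junk value [ln 0 = 0] is multiplied by [0]. *)
Lemma mul_ln_div x y : 0 <= x -> 0 < y -> x * ln (x / y) = x * ln x - x * ln y.
Proof. intros [Hx|<-] Hy; [rewrite ln_div by lra|]; ring. Qed.

Lemma sub_le_mul_ln_div x y : 0 <= x -> 0 < y -> x - y <= x * ln (x / y).
Proof.
  intros [Hx|<-] Hy; [|lra].
  assert (Hyx : ln (y / x) <= y / x - 1) by (apply ln_le_sub1, Rdiv_lt_0_compat; lra).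
  rewrite ln_div in Hyx by lra. rewrite mul_ln_div by lra.
  apply (Rmult_le_compat_l x) in Hyx; [|lra].
  replace (x * (y / x - 1)) with (y - x) in Hyx by (field; lra).
  lra.
Qed.

Lemma log_sum2 x1 x2 y1 y2 :
  0 <= x1 -> 0 <= x2 -> 0 < y1 -> 0 < y2 -> 0 < x1 + x2 ->
  (x1 + x2) * ln ((x1 + x2) / (y1 + y2)) <= x1 * ln (x1 / y1) + x2 * ln (x2 / y2).
Proof.
  intros Hx1 Hx2 Hy1 Hy2 Hx.
  set (k := (x1 + x2) / (y1 + y2)).
  assert (Hk : 0 < k) by (apply Rdiv_lt_0_compat; lra).
  assert (Hmass : k * y1 + k * y2 = x1 + x2) by (unfold k; field; lra).
  clearbody k.
  assert (Hscale : forall x y, 0 <= x -> 0 < y ->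
            x * ln (x / (k * y)) = x * ln (x / y) - x * ln k).
  { intros x y Hx0 Hy0.
    rewrite !mul_ln_div, ln_mult by (try apply Rmult_lt_0_compat; lra). ring. }
  pose proof (sub_le_mul_ln_div x1 (k * y1) Hx1 (Rmult_lt_0_compat _ _ Hk Hy1)) as T1.
  pose proof (sub_le_mul_ln_div x2 (k * y2) Hx2 (Rmult_lt_0_compat _ _ Hk Hy2)) as T2.
  rewrite Hscale in T1, T2 by lra.
  lra.
Qed.

Lemma threshold_le_div_sub Q a B : 0 < Q -> 0 < a < B ->
  1 - 1 / Q <= a / B -> Q <= B / (B - a).
Proof.
  intros HQ Hab Hthr.
  apply (Rmult_le_compat_r (B * Q)) in Hthr; [|nra].
  replace ((1 - 1 / Q) * (B * Q)) with (B * Q - B) in Hthr by (field; lra).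
  replace (a / B * (B * Q)) with (a * Q) in Hthr by (field; lra).
  apply (Rmult_le_reg_r (B - a)); [lra|].
  replace (B / (B - a) * (B - a)) with B by (field; lra).
  lra.
Qed.

Section Entropy.

Variable q : nat.
Hypothesis q_ge2 : (2 <= q)%nat.

Lemma INR_q_ge2 : 2 <= INR q.
Proof. replace 2 with (INR 2) by (simpl; lra). apply le_INR; exact q_ge2. Qed.

Lemma ln_q_pos : 0 < ln (INR q).
Proof. pose proof INR_q_ge2. rewrite <- ln_1. apply ln_increasing; lra. Qed.

Lemma logq_pred_ge0 : 0 <= logq q (INR q - 1).
Proof.
  pose proof INR_q_ge2.
  unfold logq. apply Rdiv_le_0_compat; [|exact ln_q_pos].
  rewrite <- ln_1. apply ln_le; lra.
Qed.

Lemma Ent_mul_ln p : 0 <= p <= 1 ->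
  Ent q p * ln (INR q) = - p * ln p - (1 - p) * ln (1 - p).
Proof.
  intros Hp. pose proof ln_q_pos. unfold Ent, logq.
  destruct (Rlt_dec 0 p); [destruct (Rlt_dec p 1)|].
  - field. lra.
  - replace p with 1 by lra. rewrite Rminus_diag, ln_1. ring.
  - replace p with 0 by lra. rewrite Rminus_0_r, ln_1. ring.
Qed.

Lemma Ent_persp_mul_ln a b : 0 < a <= b ->
  b * Ent q (a / b) * ln (INR q) = b * ln b - a * ln a - (b - a) * ln (b - a).
Proof.
  intros Hab.
  assert (Hp : 0 <= a / b <= 1).
  { split; [apply Rlt_le, Rdiv_lt_0_compat; lra|].
    apply (Rmult_le_reg_r b); [lra|]. field_simplify; lra. }
  rewrite Rmult_assoc, Ent_mul_ln by exact Hp.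
  replace (1 - a / b) with ((b - a) / b) by (field; lra).
  replace (b * (- (a / b) * ln (a / b) - (b - a) / b * ln ((b - a) / b)))
    with (- (a * ln (a / b)) - (b - a) * ln ((b - a) / b)) by (field; lra).
  rewrite !mul_ln_div by lra. ring.
Qed.

Lemma Ent_persp_le_linear a b : 0 < a <= b ->
  b * Ent q (a / b) <= b - a * logq q (INR q - 1).
Proof.
  intros Hab. pose proof INR_q_ge2. pose proof ln_q_pos.
  apply (Rmult_le_reg_r (ln (INR q))); [lra|].
  rewrite Ent_persp_mul_ln by exact Hab.
  replace ((b - a * logq q (INR q - 1)) * ln (INR q))
    with (b * ln (INR q) - a * ln (INR q - 1)) by (unfold logq; field; lra).
  pose proof (log_sum2 a (b - a) (INR q - 1) 1 ltac:(lra) ltac:(lra) ltac:(lra) ltac:(lra)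
                ltac:(lra)) as LS.
  replace (a + (b - a)) with b in LS by ring.
  replace (INR q - 1 + 1) with (INR q) in LS by ring.
  rewrite !mul_ln_div, ln_1 in LS by lra.
  lra.
Qed.

Lemma Ent_le_1 p : Ent q p <= 1.
Proof.
  destruct (Rlt_dec 0 p) as [Hp0|Hp0]; [destruct (Rlt_dec p 1) as [Hp1|Hp1]|].
  - pose proof (Ent_persp_le_linear p 1 ltac:(lra)) as G.
    rewrite Rdiv_1_r, Rmult_1_l in G.
    pose proof logq_pred_ge0. nra.
  - unfold Ent. destruct (Rlt_dec 0 p); destruct (Rlt_dec p 1); lra.
  - unfold Ent. destruct (Rlt_dec 0 p); lra.
Qed.

Lemma Ent_persp_increment a b d : 0 < a <= b -> 0 < d ->
  1 - 1 / INR q <= a / (b + d) ->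
  b * Ent q (a / b) + d <= (b + d) * Ent q (a / (b + d)).
Proof.
  intros Hab Hd Hthr. pose proof INR_q_ge2. pose proof ln_q_pos.
  apply (Rmult_le_reg_r (ln (INR q))); [lra|].
  rewrite Rmult_plus_distr_r, !Ent_persp_mul_ln by lra.
  pose proof (log_sum2 a (b - a) a (b + d - a) ltac:(lra) ltac:(lra) ltac:(lra) ltac:(lra)
                ltac:(lra)) as LS.
  replace (a + (b - a)) with b in LS by ring.
  replace (a + (b + d - a)) with (b + d) in LS by ring.
  rewrite !mul_ln_div, Rminus_diag in LS by lra.
  assert (Hslope : ln (INR q) <= ln (b + d) - ln (b + d - a)).
  { rewrite <- ln_div by lra. apply ln_le; [lra|].
    apply threshold_le_div_sub; lra. }
  apply (Rmult_le_compat_l d) in Hslope; [|lra].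
  lra.
Qed.

Definition Zpart (a b : R) : R :=
  if Rle_dec (1 - 1 / INR q) (a / b) then b * Ent q (a / b)
  else b - a * logq q (INR q - 1).

Lemma Zpart_shift_ge a b d : 0 < a <= b -> 0 < d -> Zpart a b + d <= Zpart a (b + d).
Proof.
  intros Hab Hd.
  assert (Hratio : a / (b + d) <= a / b).
  { apply Rmult_le_compat_l; [lra|]. apply Rinv_le_contravar; lra. }
  unfold Zpart.
  destruct (Rle_dec (1 - 1 / INR q) (a / (b + d))) as [H1|H1];
    destruct (Rle_dec (1 - 1 / INR q) (a / b)) as [H2|H2].
  - exact (Ent_persp_increment a b d Hab Hd H1).
  - lra.
  - pose proof (Ent_persp_le_linear a b Hab). lra.
  - lra.
Qed.

Lemma Zpart_le a b : 0 < a -> 0 < b -> Zpart a b <= b.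
Proof.
  intros Ha Hb. unfold Zpart.
  destruct (Rle_dec (1 - 1 / INR q) (a / b)).
  - pose proof (Ent_le_1 (a / b)). nra.
  - pose proof logq_pred_ge0. nra.
Qed.

End Entropy.

Lemma Zterm_Zpart q gamma sigma y x t1 :
  Zterm q gamma sigma y x t1 = Zpart q (y + x + t1) (y + sigma / gamma + t1).
Proof. reflexivity. Qed.

Lemma Sfun_le_3 q gamma sigma y x t1 : (2 <= q)%nat ->
  0 < y + x + t1 <= y + sigma / gamma + t1 -> y + sigma / gamma + t1 <= 1 ->
  0 <= t1 <= 1 -> Sfun q gamma sigma y x t1 <= 3.
Proof.
  intros Hq Hab Hb Ht. unfold Sfun. rewrite Zterm_Zpart.
  pose proof (Zpart_le q Hq (y + x + t1) (y + sigma / gamma + t1) ltac:(lra) ltac:(lra)).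
  pose proof (Ent_le_1 q Hq t1).
  pose proof (Ent_le_1 q Hq ((y + x + t1) / (1 - t1))).
  nra.
Qed.

Lemma Sfun_sigma_shift q gamma s s' y x t1 : (2 <= q)%nat -> 0 < gamma -> s < s' ->
  0 < y + x + t1 <= y + s / gamma + t1 ->
  Sfun q gamma s y x t1 + (s' - s) / gamma <= Sfun q gamma s' y x t1.
Proof.
  intros Hq Hg Hs Hab. unfold Sfun. rewrite !Zterm_Zpart.
  replace (y + s' / gamma + t1) with (y + s / gamma + t1 + (s' - s) / gamma)
    by (field; lra).
  pose proof (Zpart_shift_ge q Hq _ _ ((s' - s) / gamma) Hab
                ltac:(apply Rdiv_lt_0_compat; lra)).
  lra.
Qed.

Lemma Lub_Rbar_shift_lt (E1 E2 : R -> Prop) (d M : R) : 0 < d ->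
  (exists v, E1 v) -> (forall w, E2 w -> w <= M) ->
  (forall v, E1 v -> exists w, E2 w /\ v + d <= w) ->
  real (Lub_Rbar E1) < real (Lub_Rbar E2).
Proof.
  intros Hd [v0 Hv0] HM Hshift.
  destruct (Lub_Rbar_correct E1) as [ub1 least1].
  destruct (Lub_Rbar_correct E2) as [ub2 least2].
  destruct (Hshift v0 Hv0) as [w0 [Hw0 _]].
  assert (A2 : Rbar_le (Lub_Rbar E2) M) by (apply least2; intros w Hw; apply HM, Hw).
  assert (B2 : Rbar_le w0 (Lub_Rbar E2)) by (apply ub2, Hw0).
  destruct (Lub_Rbar E2) as [l2| |]; simpl in A2, B2; try contradiction.
  assert (A1 : Rbar_le (Lub_Rbar E1) (l2 - d)).
  { apply least1. intros v Hv. destruct (Hshift v Hv) as [w [Hw Hvw]].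
    pose proof (ub2 w Hw) as Hwl. simpl in Hwl |- *. lra. }
  assert (B1 : Rbar_le v0 (Lub_Rbar E1)) by (apply ub1, Hv0).
  destruct (Lub_Rbar E1) as [l1| |]; simpl in A1, B1; try contradiction.
  simpl. lra.
Qed.

Theorem lemma4p7 (q : nat) (gamma y x1 : R) :
  (2 <= q)%nat -> 0 < gamma -> 0 < y -> 0 <= x1 -> y + 4 * x1 < 1 ->
  forall s1 s2 : R,
    0 <= s1 -> y + 4 * x1 + s1 / gamma < 1 ->
    0 <= s2 -> y + 4 * x1 + s2 / gamma < 1 ->
    s1 < s2 -> Ifun q gamma y x1 s1 < Ifun q gamma y x1 s2.
Proof.
  intros Hq Hg Hy Hx1 _ s1 s2 Hs1 Hc1 _ Hc2 Hlt.
  assert (Hs1g : 0 <= s1 / gamma) by (apply Rdiv_le_0_compat; lra).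
  assert (Hd : 0 < (s2 - s1) / gamma) by (apply Rdiv_lt_0_compat; lra).
  assert (Hs12 : s2 / gamma = s1 / gamma + (s2 - s1) / gamma) by (field; lra).
  apply (Lub_Rbar_shift_lt _ _ ((s2 - s1) / gamma) 3 Hd).
  - exists (Sfun q gamma s1 y 0 0), 0, 0. repeat split; lra.
  - intros w (x & t1 & Ht & Hx & ->). apply Sfun_le_3; [exact Hq | lra ..].
  - intros v (x & t1 & Ht & Hx & ->). exists (Sfun q gamma s2 y x t1). split.
    + exists x, t1. repeat split; lra.
    + apply Sfun_sigma_shift; [exact Hq | exact Hg | exact Hlt | lra].
Qed.
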